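(* Let $G$ be a graph, $r\ge 1$, $L_S=(s_1,\dots,s_n)$ a subordering of $S\subseteq V(G)$, and $v\in V(G)\setminus S$. Let $L_{S\cup\{v\}}$ be any subordering of $S\cup\{v\}$ with $L_{S\cup\{v\}}[S]=L_S$. Then $$\mathrm{Wreach}_r(G,L_{S\cup\{v\}},v)\setminus\{v\}=\{s\in\mathrm{bp}(G,L_S,v) \mid s\preceq_{L_{S\cup\{v\}}} v\}.$$
   Context: All graphs are finite, undirected, without loops. A path has length equal to its number of vertices minus one. A subordering $L_S$ is a linear ordering of $S\subseteq V(G)$; $\preceq_{L_S}$ means precedes or equal; $L_{S'}[S]$ is the restriction of $L_{S'}$ to $S$. For a subordering $L_S$ and $u,w\in V(G)$, $u\in\mathrm{Wreach}_r(G,L_S,w)$ iff either $u=w$, or $u\in S$ and there is a path $P$ of length at most $r$ between $u$ and $w$ with $u\preceq_{L_S} x$ for all $x\in V(P)\cap S$. For $L_S=(s_1,\dots,s_n)$ and $v\notin S$: $\mathrm{placeafter}(L_S,s_i,v)=(s_1,\dots,s_i,v,s_{i+1},\dots,s_n)$ and $\mathrm{placebefore}(L_S,s_i,v)=(s_1,\dots,s_{i-1},v,s_i,\dots,s_n)$. A vertex $s\in S$ is a breakpoint of $v$ if $\mathrm{Wreach}_r(G,\mathrm{placebefore}(L_S,s,v),v)\ne\mathrm{Wreach}_r(G,\mathrm{placeafter}(L_S,s,v),v)$; $\mathrm{bp}(G,L_S,v)$ is the set of breakpoints of $v$. *)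

From mathcomp Require Import all_boot.
Set Implicit Arguments. Unset Strict Implicit. Unset Printing Implicit Defensive.

(* A graph: vertex type T : finType, adjacency e : rel T, assumed symmetric
   and irreflexive in the theorem.  A subordering L_S of S is a duplicate-free
   sequence L : seq T; S is the set of its elements. *)

Definition preceq (T : eqType) (L : seq T) (x y : T) : bool :=
  [&& x \in L, y \in L & index x L <= index y L].

Definition is_path_le (T : eqType) (e : rel T) (r : nat) (u w : T) (p : seq T) : Prop :=
  [/\ path e u p, last u p = w, uniq (u :: p) & size p <= r].

Definition Wreach (T : eqType) (e : rel T) (r : nat) (L : seq T) (w u : T) : Prop :=
  u = w \/
  (u \in L /\ exists p : seq T, is_path_le e r u w p /\
     forall x, x \in u :: p -> x \in L -> preceq L u x).

Definition placeafter (T : eqType) (L : seq T) (s v : T) : seq T :=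
  take (index s L).+1 L ++ v :: drop (index s L).+1 L.

Definition placebefore (T : eqType) (L : seq T) (s v : T) : seq T :=
  take (index s L) L ++ v :: drop (index s L) L.

Definition breakpoint (T : eqType) (e : rel T) (r : nat) (L : seq T) (v s : T) : Prop :=
  s \in L /\
  ~ (forall x, Wreach e r (placebefore L s v) v x <-> Wreach e r (placeafter L s v) v x).

(* For u in S, u is weakly r-reachable from v in an ordering extending L_S
   exactly when u precedes v and some short path from u to v has u as its
   L_S-minimum on S ([min_path] below); the position of v only matters
   through the first condition.  Placing v just before u makes the first
   condition fail at u, placing it just after makes it hold, and nothing
   changes at other vertices, so u is a breakpoint iff [min_path] holds. *)
From Stdlib Require Import Classical.
From mathcomp Require Import all_boot.

Set Implicit Arguments.
Unset Strict Implicit.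
Unset Printing Implicit Defensive.

Lemma leq_index_filter (T : eqType) (a : pred T) (s : seq T) x y :
  a x -> a y -> x \in s -> y \in s ->
  (index x (filter a s) <= index y (filter a s)) = (index x s <= index y s).
Proof.
move=> ax ay; elim: s => [|z s IH] //=; rewrite !in_cons.
have [-> _ _|zx] := eqVneq z x; first by rewrite ax /= eqxx.
have [zy _ _|zy /= xs ys] := eqVneq z y.
  by subst z; rewrite ay /= eqxx (negbTE zx).
by case: (a z) => /=; rewrite ?(negbTE zx) ?(negbTE zy) ?ltnS IH.
Qed.

Lemma preceq_filter (T : eqType) (L P : seq T) x y :
  filter (fun z => z \in L) P = L -> x \in L -> y \in L ->
  preceq P x y = preceq L x y.
Proof.
move=> PL xL yL.
have memP z : z \in L -> z \in P by rewrite -{1}PL mem_filter => /andP[].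
rewrite /preceq memP // memP // xL yL /=.
by rewrite -(@leq_index_filter _ (fun z => z \in L)) ?memP // PL.
Qed.

Lemma preceq_cat_cons (T : eqType) (s1 s2 : seq T) v x :
  v \notin s1 -> x != v -> preceq (s1 ++ v :: s2) x v = (x \in s1).
Proof.
move=> vNs1 xv; rewrite /preceq !mem_cat !in_cons eqxx !orbT /=.
rewrite !index_cat (negbTE vNs1) /= eqxx addn0.
case xs1: (x \in s1) => /=; first by rewrite ltnW // index_mem.
by rewrite [v == x]eq_sym (negbTE xv) /= addnS ltnNge leq_addr andbF.
Qed.

Definition insert_at (T : Type) (n : nat) (s : seq T) (v : T) : seq T :=
  take n s ++ v :: drop n s.

Section InsertAt.

Variables (T : eqType) (L : seq T) (v : T).
Hypothesis vNL : v \notin L.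

Lemma mem_insert_at n y : (y \in insert_at n L v) = (y == v) || (y \in L).
Proof. by rewrite mem_cat in_cons orbCA -mem_cat cat_take_drop. Qed.

Lemma filter_insert_at n : filter (fun z => z \in L) (insert_at n L v) = L.
Proof.
rewrite filter_cat /= (negbTE vNL) -filter_cat cat_take_drop.
exact/all_filterP/allP.
Qed.

Lemma preceq_insert_at n x :
  x \in L -> preceq (insert_at n L v) x v = (index x L < n).
Proof.
move=> xL; rewrite preceq_cat_cons; first exact: in_take.
  by apply: contra vNL => /mem_take.
by apply: contraNneq vNL => <-.
Qed.

End InsertAt.

Definition min_path (T : eqType) (e : rel T) (r : nat) (L : seq T) (w u : T) :=
  exists p, is_path_le e r u w p /\
    forall x, x \in u :: p -> x \in L -> preceq L u x.

Lemma Wreach_extension (T : eqType) (e : rel T) (r : nat) (L P : seq T) v u :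
  (forall y, (y \in P) = (y == v) || (y \in L)) ->
  filter (fun z => z \in L) P = L -> v \notin L -> u \in L ->
  Wreach e r P v u <-> preceq P u v /\ min_path e r L v u.
Proof.
move=> memP PL vNL uL; split.
  case=> [uv|[_ [p [pP pmin]]]]; first by rewrite -uv uL in vNL.
  have v_p : v \in u :: p by case: pP => _ <- _ _; apply: mem_last.
  split; first by apply: pmin; rewrite // memP eqxx.
  exists p; split=> // y yp yL.
  by rewrite -(preceq_filter PL) //; apply: pmin; rewrite // memP yL orbT.
case=> uv [p [pP pmin]]; right; split; first by rewrite memP uL orbT.
exists p; split=> // y yp; rewrite memP => /orP[/eqP -> //|yL].
by rewrite (preceq_filter PL) //; apply: pmin.
Qed.

Lemma breakpointE (T : eqType) (e : rel T) (r : nat) (L : seq T) v u :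
  uniq L -> v \notin L -> u \in L ->
  breakpoint e r L v u <-> min_path e r L v u.
Proof.
move=> Luniq vNL uinL.
have W n x : x \in L ->
    Wreach e r (insert_at n L v) v x <-> index x L < n /\ min_path e r L v x.
  move=> xL; rewrite -(preceq_insert_at vNL n xL).
  by apply: Wreach_extension => //; [exact: mem_insert_at|exact: filter_insert_at].
rewrite /breakpoint /placebefore /placeafter.
rewrite -/(insert_at (index u L) L v) -/(insert_at (index u L).+1 L v); split.
  case=> _ differ; apply: NNPP => noPath; apply: differ => x.
  have [->|xv] := eqVneq x v; first by split=> _; left.
  case xL: (x \in L); last first.
    by split=> -[/eqP|[]]; rewrite ?mem_insert_at (negbTE xv) ?xL.
  rewrite !W //; have [->|xu] := eqVneq x u; first by split=> -[].
  have ne : index x L != index u L by apply: contra xu => /eqP/index_inj ->.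
  suff -> : index x L < (index u L).+1 = (index x L < index u L) by [].
  by rewrite ltnS leq_eqVlt (negbTE ne).
move=> uPath; split=> // same.
have /(W _ _ uinL)[] := (same u).2 ((W _ _ uinL).2 (conj (ltnSn _) uPath)).
by rewrite ltnn.
Qed.

Theorem lemma5 (T : finType) (e : rel T) (r : nat) (L : seq T) (v : T)
    (L' : seq T) :
  symmetric e -> irreflexive e -> 1 <= r ->
  uniq L -> v \notin L ->
  uniq L' -> perm_eq L' (v :: L) -> filter (fun x => x \in L) L' = L ->
  forall u : T,
    (Wreach e r L' v u /\ u <> v) <-> (breakpoint e r L v u /\ preceq L' u v).
Proof.
move=> _ _ _ Luniq vNL _ permL' L'L u.
have memL' y : (y \in L') = (y == v) || (y \in L).
  by rewrite (perm_mem permL') in_cons.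
have WE := Wreach_extension e r memL' L'L vNL.
have bpE := breakpointE e r Luniq vNL.
split.
  case=> Wu uv; have uinL : u \in L.
    by case: Wu => [//|[]]; rewrite memL' => /orP[/eqP|].
  by have [uPv /(bpE _ uinL) bp] := (WE _ uinL).1 Wu.
case=> bp uPv; have uinL : u \in L by case: bp.
split; last by move=> uv; rewrite -uv uinL in vNL.
by apply/(WE _ uinL); split; last exact/(bpE _ uinL).
Qed.
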